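(* Let $n\in\mathbb{N}$ and let $\underline{\Delta},\tilde{\Delta}:\{k\in\mathbb{N}_0^{\{0,1\}^2}:k_{++}=n\}\to[-1,1]$ be two lower confidence bounds for the parameter $q\mapsto q_{01}-q_{10}$ in the multinomial model $\mathcal{M}:=(\mathrm{M}_{n,q}:q\in\mathrm{prob}(\{0,1\}^2))$ which are equivalent, i.e. $\mathrm{M}_{n,q}(\tilde{\Delta}\ge t)=\mathrm{M}_{n,q}(\underline{\Delta}\ge t)$ for all $q\in\mathrm{prob}(\{0,1\}^2)$ and all $t<q_{01}-q_{10}$. Then $\underline{\Delta}=\tilde{\Delta}$.
   Context: $\mathrm{prob}(\{0,1\}^2)$ is the set of probability densities on $\{0,1\}^2$; $\mathrm{M}_{n,q}$ is the multinomial distribution with sample size $n$ and probability vector $q$; $k_{++}=\sum_{i,j\in\{0,1\}}k_{ij}$. A lower $\beta$-confidence bound for a parameter $\kappa$ in a model $(P_\theta)$ is a function $\underline{\kappa}$ with $P_\theta(\underline{\kappa}\le\kappa(\theta))\ge\beta$ for all $\theta$ (here for some fixed $\beta\in[0,1]$). *)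

From HB Require Import structures.
From mathcomp Require Import all_boot all_order all_algebra.
From mathcomp Require Import reals.
Unset Strict Implicit. Unset Printing Implicit Defensive.
Import Order.TTheory GRing.Theory Num.Theory.
Local Open Scope ring_scope.

(* Cells of the 2x2 table: {0,1}^2, encoded as bool * bool
   (false = 0, true = 1). *)
Definition cell := (bool * bool)%type.

(* Sample space {k in N_0^{ {0,1}^2 } : k_{++} = n}.  Each k_ij <= n, so
   entries are taken in 'I_n.+1. *)
Definition sspace (n : nat) :=
  {k : {ffun cell -> 'I_n.+1} | (\sum_(c : cell) (k c : nat) == n)%N}.

Definition kval (n : nat) (k : sspace n) (c : cell) : nat := val k c.

Definition is_prob {R : realType} (q : {ffun cell -> R}) : Prop :=
  (forall c, 0 <= q c) /\ \sum_(c : cell) q c = 1.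

Definition mult_pmf {R : realType} (n : nat) (q : {ffun cell -> R})
    (k : sspace n) : R :=
  (n`!)%:R / (\prod_(c : cell) (kval n k c)`!)%:R
    * \prod_(c : cell) q c ^+ kval n k c.

Definition multinomial {R : realType} (n : nat) (q : {ffun cell -> R})
    (A : pred (sspace n)) : R :=
  \sum_(k : sspace n | A k) mult_pmf n q k.

Definition kappa {R : realType} (q : {ffun cell -> R}) : R :=
  q (false, true) - q (true, false).

Definition lower_conf_bound {R : realType} (n : nat) (beta : R)
    (D : sspace n -> R) : Prop :=
  forall q : {ffun cell -> R}, is_prob q ->
    beta <= multinomial n q [pred k | D k <= kappa q].

From HB Require Import structures.
From mathcomp Require Import all_boot all_order all_algebra.
From mathcomp Require Import reals.
From mathcomp Require Import ring lra.
From Stdlib Require Import FunctionalExtensionality.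
Import Order.TTheory GRing.Theory Num.Theory.
Local Open Scope ring_scope.

(* For x > 0 put weights 1, x, x^(n+1), x^((n+1)^2) on the cells 01, 00, 10,
   11 and normalise.  Under this q_x the multinomial probability of an event
   is, up to the positive factor (sum of weights)^(-n), a polynomial in x in
   which each table k contributes its multinomial coefficient times the
   monomial x^(code k), and code k (the table read in base n+1) is injective.
   For t < 1 and small x we have q_x,01 - q_x,10 > t, so equivalence of the
   bounds makes the polynomials of the events {t <= D'} and {t <= D} agree on
   an interval, hence coefficientwise: the two events coincide for every
   t < 1, and as both bounds take values <= 1 they are equal. *)

Lemma big_cell (T : Type) (idx : T) (op : Monoid.com_law idx) (F : cell -> T) :
  \big[op/idx]_(c : cell) F c =
  op (op (F (true, true)) (F (true, false))) (op (F (false, true)) (F (false, false))).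
Proof.
transitivity (\big[op/idx]_(p : bool * bool) F (p.1, p.2)); first by apply: eq_bigr => -[].
by rewrite -(pair_bigA _ (fun a b => F (a, b))) /= !big_bool.
Qed.

Lemma digit_split_inj (d q r q' r' : nat) : (r < d)%N -> (r' < d)%N ->
  (r + d * q = r' + d * q')%N -> q = q' /\ r = r'.
Proof.
move=> hr hr' /(congr1 (edivn^~ d)).
by rewrite ![(_ + d * _)%N]addnC !(mulnC d) !edivn_eq // => -[-> ->].
Qed.

Lemma coef_sumXn_inj (R : nzSemiRingType) (I : finType) (a : I -> R) (e : I -> nat) :
  injective e -> forall j, (\sum_i a i *: 'X^(e i))`_(e j) = a j.
Proof.
move=> e_inj j; rewrite coef_sumMXn (big_pred1 j) // => i /=.
by rewrite (inj_eq e_inj).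
Qed.

(* A nonzero polynomial has finitely many roots, but the points r/(i+2) are
   infinitely many. *)
Lemma poly_eq0_near0 {R : realFieldType} {p : {poly R}} {r : R} : 0 < r ->
  (forall x, 0 < x < r -> p.[x] = 0) -> p = 0.
Proof.
move=> r_gt0 p0; apply/eqP; apply: contraT => p_neq0.
pose rs := mkseq (fun i => r / i.+2%:R) (size p).
have := max_poly_roots p_neq0 (rs := rs); rewrite size_mkseq ltnn; apply.
  apply/allP => _ /mapP [i _ ->]; apply/rootP/p0.
  have i2_gt1 : 1 < i.+2%:R :> R by rewrite ltr1n.
  by rewrite divr_gt0 ?ltr_pdivrMr ?ltr_pMr //; lra.
rewrite map_inj_uniq ?iota_uniq // => i j /(mulfI (lt0r_neq0 r_gt0)) /invr_inj.
by move/eqP; rewrite eqr_nat => /eqP [].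
Qed.

Lemma eq_of_le_iff_lt1 (R : realFieldType) (a b : R) : a <= 1 -> b <= 1 ->
  (forall t, t < 1 -> (t <= a) = (t <= b)) -> a = b.
Proof.
wlog ab : a b / a < b => [W a_le1 b_le1 H|a_le1 b_le1 H].
  have [/W|/W|//] := ltgtP a b; first exact.
  by move=> ba; apply/esym/ba => // t /H.
have := H ((a + b) / 2) ltac:(lra).
have -> : (a + b) / 2 <= b by lra.
by rewrite leNgt (_ : a < (a + b) / 2) //; lra.
Qed.

Section MonomialFamily.
Context {R : realType} {n : nat}.

Lemma sum_kval (k : sspace n) : (\sum_(c : cell) kval n k c)%N = n.
Proof. exact/eqP/(valP k). Qed.

Definition cell_exp (c : cell) : nat :=
  match c with
  | (false, true) => 0
  | (false, false) => 1
  | (true, false) => n.+1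
  | (true, true) => n.+1 * n.+1
  end.

Definition code (k : sspace n) : nat := \sum_(c : cell) cell_exp c * kval n k c.

Lemma code_inj : injective code.
Proof.
have digits k : code k = (kval n k (false, false) + n.+1 *
    (kval n k (true, false) + n.+1 * kval n k (true, true)))%N.
  by rewrite /code big_cell /=; ring.
have lt_kval c (k : sspace n) : (kval n k c < n.+1)%N by apply: ltn_ord.
move=> k k'; rewrite !digits => /digit_split_inj[//|//|+ e00].
move=> /digit_split_inj[//|//|e11 e10].
have := etrans (sum_kval k) (esym (sum_kval k')).
rewrite !big_cell e11 e10 e00 => /addnI/addIn e01.
by apply/val_inj/ffunP => -[[] []]; apply/val_inj.
Qed.

Definition weight_sum (x : R) : R := \sum_(c : cell) x ^+ cell_exp c.

Definition qx (x : R) : {ffun cell -> R} :=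
  [ffun c => x ^+ cell_exp c / weight_sum x].

Lemma weight_sum_gt0 {x : R} : 0 <= x -> 0 < weight_sum x.
Proof.
move=> x_ge0; rewrite /weight_sum (bigD1 (false, true)) //= expr0.
by apply: ltr_wpDr => //; apply: sumr_ge0 => c _; apply: exprn_ge0.
Qed.

Lemma qx_prob (x : R) : 0 <= x -> is_prob (qx x).
Proof.
move=> x_ge0; have S_gt0 := weight_sum_gt0 x_ge0; split.
  by move=> c; rewrite ffunE divr_ge0 ?exprn_ge0 // ltW.
rewrite (eq_bigr (fun c => x ^+ cell_exp c / weight_sum x)) => [|c _]; last by rewrite ffunE.
by rewrite -mulr_suml divff ?gt_eqF.
Qed.

Definition mcoef (k : sspace n) : R :=
  (n`!)%:R / (\prod_(c : cell) (kval n k c)`!)%:R.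

Lemma mcoef_neq0 (k : sspace n) : mcoef k != 0.
Proof.
rewrite mulf_neq0 // ?invr_eq0 pnatr_eq0 -lt0n ?fact_gt0 //.
by apply: prodn_gt0 => c; rewrite fact_gt0.
Qed.

Lemma mult_pmf_qx (x : R) (k : sspace n) :
  mult_pmf n (qx x) k = mcoef k * (x ^+ code k / weight_sum x ^+ n).
Proof.
rewrite /mult_pmf; congr (_ * _).
under eq_bigr => c _ do rewrite ffunE expr_div_n -exprM.
by rewrite prodf_div !prodrXr sum_kval.
Qed.

(* The weights of cells 10 and 11 are at most x, so kappa (qx x) is at least
   (1 - x) / (1 + 3 x); the smallness condition makes this exceed t. *)
Lemma kappa_qx_gt (t x : R) : t < 1 -> 0 < x -> x * (5 - t) < 1 - t ->
  t < kappa (qx x).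
Proof.
move=> t_lt1 x_gt0 x_small.
have x_lt1 : x < 1 by nra.
have le_x m : (0 < m)%N -> 0 <= x ^+ m <= x.
  by move=> m_gt0; rewrite exprn_ge0 ?ler_iXnr ?ltW.
have /andP[a_ge0 a_le] := le_x _ (ltn0Sn n).
have /andP[b_ge0 b_le] := le_x _ (muln_gt0 n.+1 n.+1).
have := weight_sum_gt0 (ltW x_gt0).
rewrite /kappa !ffunE /weight_sum big_cell /= expr0 expr1 -mulrBl => S_gt0.
rewrite ltr_pdivlMr //.
have [t_ge0|t_lt0] := lerP 0 t; last first.
  have : t * (x ^+ (n.+1 * n.+1) + x ^+ n.+1 + (1 + x)) < 0 by rewrite nmulr_rlt0.
  lra.
have : 0 <= x * (1 - t) by rewrite mulr_ge0 //; lra.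
nra.
Qed.

Lemma multinomial_qx_inj {A B : pred (sspace n)} {r : R} : 0 < r ->
  (forall x, 0 < x < r -> multinomial n (qx x) A = multinomial n (qx x) B) ->
  A =1 B.
Proof.
move=> r_gt0 eqAB k.
pose g k : R := (A k)%:R - (B k)%:R.
pose p : {poly R} := \sum_k (g k * mcoef k) *: 'X^(code k).
have p_near0 x : 0 < x < r -> p.[x] = 0.
  move=> /[dup] /eqAB eqABx /andP[x_gt0 _].
  have S_neq0 : weight_sum x ^+ n != 0 by rewrite expf_neq0 ?gt_eqF ?weight_sum_gt0 ?ltW.
  have pmf_sum0 : \sum_k g k * mult_pmf n (qx x) k = 0.
    rewrite -[RHS](subrr (multinomial n (qx x) B)) -{1}eqABx /multinomial.
    rewrite [X in _ = X - _]big_mkcond [X in _ = _ - X]big_mkcond -sumrB.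
    apply: eq_bigr => j _.
    by rewrite /g; case: (A j); case: (B j) => /=; ring.
  rewrite horner_sum; transitivity ((\sum_k g k * mult_pmf n (qx x) k) * weight_sum x ^+ n).
    rewrite mulr_suml; apply: eq_bigr => j _.
    by rewrite hornerZ hornerXn mult_pmf_qx; field.
  by rewrite pmf_sum0 mul0r.
have := congr1 (fun q : {poly R} => q`_(code k)) (poly_eq0_near0 r_gt0 p_near0).
rewrite /= coef0 /p coef_sumXn_inj; last exact: code_inj.
move/eqP; rewrite mulf_eq0 (negbTE (mcoef_neq0 k)) orbF subr_eq0 eqr_nat.
by case: (A k); case: (B k).
Qed.

End MonomialFamily.

Theorem lemma14 (R : realType) (n : nat) (beta : R)
    (D D' : sspace n -> R) :
  (0 < n)%N ->
  0 <= beta <= 1 ->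
  (forall k, -1 <= D k <= 1) ->
  (forall k, -1 <= D' k <= 1) ->
  lower_conf_bound n beta D ->
  lower_conf_bound n beta D' ->
  (forall q : {ffun cell -> R}, is_prob q ->
     forall t : R, t < kappa q ->
       multinomial n q [pred k | t <= D' k] = multinomial n q [pred k | t <= D k]) ->
  D = D'.
Proof.
move=> _ _ D_bnd D'_bnd _ _ equiv; apply: functional_extensionality => k.
have /andP[_ Dk_le1] := D_bnd k; have /andP[_ D'k_le1] := D'_bnd k.
apply: eq_of_le_iff_lt1 => // t t_lt1.
have r_gt0 : 0 < (1 - t) / (5 - t) by rewrite divr_gt0 //; lra.
apply: (multinomial_qx_inj (A := [pred j | t <= D j]) (B := [pred j | t <= D' j]) r_gt0).
move=> x /andP[x_gt0 x_lt].
rewrite ltr_pdivlMr in x_lt; last by lra.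
by rewrite equiv //; [exact/qx_prob/ltW | exact: kappa_qx_gt].
Qed.
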